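(* Let $R$ be a finite ring with identity, $\alpha\in(0,1)$, and let $\pi_U$ be the stationary distribution of the Markov chain $(X^U_t)$ on $R$ defined below. Then for every $x\in R$, \[\pi_U(x)=\frac{\alpha+(1-\alpha)\displaystyle\sum_{y\in\phi,\ I_x\subsetneq I_y}|U_y|\,|\mathrm{LAnn}_R(y)|\,\pi_U(y)}{|R|-(1-\alpha)\,|U_x|\,|\mathrm{LAnn}_R(x)|}.\]
   Context: The chain $(X^U_t)$: at each step an independent coin with Heads probability $\alpha$ is tossed; on Heads, $X_{t+1}=X_t+Y$ with $Y$ uniform on $R$; on Tails, $X_{t+1}=Z\cdot X_t$ with $Z$ uniform on $R$ (all independent). $U_R$ is the unit group of $R$. For $a\in R$, $I_a=Ra$ is the principal left ideal generated by $a$; $\phi$ is a fixed set of generators of the distinct principal left ideals of $R$ (one per ideal). $\mathrm{LAnn}_R(y)=\{r\in R\mid ry=0\}$. $\mathrm{LStab}(x)=\{u\in U_R\mid ux=x\}$ and $U_x\subseteq U_R$ is a fixed set of distinct representatives of the left cosets of $\mathrm{LStab}(x)$ in $U_R$ (so $|U_x|=[U_R:\mathrm{LStab}(x)]$). *)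

From HB Require Import structures.
From mathcomp Require Import all_boot all_order all_algebra.
Set Implicit Arguments. Unset Strict Implicit. Unset Printing Implicit Defensive.
Import Order.TTheory GRing.Theory Num.Theory.
Local Open Scope ring_scope.

Section Defs.
Variable A : finPzRingType.

Definition unitsR : {set A} := [set u | [exists v, (u * v == 1) && (v * u == 1)]].

Definition lideal (a : A) : {set A} := [set r * a | r : A].

Definition lann (y : A) : {set A} := [set r | r * y == 0].

Definition lstab (x : A) : {set A} := [set u in unitsR | u * x == x].

Definition lcosets_stab (x : A) : {set {set A}} :=
  [set [set u * s | s in lstab x] | u in unitsR].

(* |U_x| = [U_A : LStab(x)] = number of left cosets *)
Definition Ucard (x : A) : nat := #|lcosets_stab x|.

Definition ideal_gen_set (phi : {set A}) : Prop :=
  (forall a : A, exists2 y, y \in phi & lideal y = lideal a) /\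
  {in phi &, forall y1 y2, lideal y1 = lideal y2 -> y1 = y2}.

Variable K : realFieldType.

(* transition probability of the chain X^U: w.p. alpha add a uniform Y,
   w.p. 1-alpha multiply on the left by a uniform Z *)
Definition transU (alpha : K) (x z : A) : K :=
  alpha / #|A|%:R + (1 - alpha) * #|[set r : A | r * x == z]|%:R / #|A|%:R.

Definition stationaryU (alpha : K) (pi : A -> K) : Prop :=
  (forall x, 0 <= pi x) /\ \sum_(x : A) pi x = 1 /\
  (forall z, pi z = \sum_(x : A) pi x * transU alpha x z).

End Defs.

(* Since r x = z has |LAnn x| solutions r when z lies in Rx and none otherwise,
   stationarity reads |R| pi(z) = alpha + (1 - alpha) sum_{x : Rz ⊆ Rx} |LAnn x| pi(x).
   Both pi and |LAnn| are constant on each class {x | Rx = Ry}, and this class is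
   the orbit U y, of size [U : LStab y]; isolating the class of z in the sum gives
   the formula.  The orbit description rests on the fact that in a finite ring
   Rx = Ry forces x = u y for a unit u.  This is a counting argument: the number of
   r in R r0 with r y = z depends only on Rz, hence, by induction along inclusion of
   left ideals, so does the number of generators r of a given left ideal with
   r y = z.  For the ideal R itself these generators are units, and for z = y the
   generator 1 exists. *)

From HB Require Import structures.
From mathcomp Require Import all_boot all_order all_algebra.
From mathcomp Require Import ring lra.
Import Order.TTheory GRing.Theory Num.Theory.
Set Implicit Arguments. Unset Strict Implicit. Unset Printing Implicit Defensive.
Local Open Scope ring_scope.

Section Units.
Variable A : finPzRingType.

Lemma unitsRP (u : A) :
  reflect (exists v, u * v = 1 /\ v * u = 1) (u \in unitsR A).
Proof.
rewrite inE; apply: (iffP existsP) => [[v /andP[/eqP uv /eqP vu]]|[v [uv vu]]].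
  by exists v.
by exists v; rewrite uv vu !eqxx.
Qed.

(* A left inverse is two-sided in a finite ring: [r * _] is injective, hence onto. *)
Lemma left_inv_unitsR (v r : A) : v * r = 1 -> r \in unitsR A.
Proof.
move=> vr; have inj_r : injective (fun a : A => r * a).
  by move=> a b /= rab; rewrite -(mul1r a) -(mul1r b) -vr -!mulrA rab.
have [g _ rg] := injF_bij inj_r; have rg1 : r * g 1 = 1 := rg 1.
have gv : g 1 = v by have := congr1 ( *%R v) rg1; rewrite mulrA vr mul1r mulr1.
by apply/unitsRP; exists v; split; rewrite // -gv.
Qed.

Lemma unitsRM (a b : A) :
  a \in unitsR A -> b \in unitsR A -> a * b \in unitsR A.
Proof.
move=> /unitsRP[a' [_ a'a]] /unitsRP[b' [_ b'b]].
by apply: (@left_inv_unitsR (b' * a')); rewrite mulrA -(mulrA b') a'a mulr1.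
Qed.

End Units.

Section LeftIdeals.
Variable A : finPzRingType.
Implicit Types a b r x y z : A.

Lemma lidealP a x : reflect (exists r, x = r * a) (x \in lideal a).
Proof. by apply: (iffP imsetP) => [[r _ ->]|[r ->]]; exists r. Qed.

Lemma mem_lideal r a : r * a \in lideal a.
Proof. by apply/lidealP; exists r. Qed.

Lemma lideal_id a : a \in lideal a.
Proof. by rewrite -{1}(mul1r a) mem_lideal. Qed.

Lemma lideal_subE a b : (a \in lideal b) = (lideal a \subset lideal b).
Proof.
apply/idP/subsetP => [/lidealP[s ->] _ /lidealP[r ->]|sub_ab].
  by rewrite mulrA mem_lideal.
exact/sub_ab/lideal_id.
Qed.

Lemma lideal_unitl u y : u \in unitsR A -> lideal (u * y) = lideal y.
Proof.
move=> /unitsRP[v [_ vu]]; apply/eqP; rewrite eqEsubset -!lideal_subE mem_lideal.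
by rewrite -{1}(mul1r y) -vu -mulrA mem_lideal.
Qed.

Lemma card_mulr_fiber (L : {set A}) y r0 :
  {in L &, forall a b, a - b \in L} -> r0 \in L ->
  #|[set r in L | r * y == r0 * y]| = #|[set k in L | k * y == 0]|.
Proof.
move=> subL r0L; have L0 : 0 \in L by rewrite -(subrr r0) subL.
rewrite -(card_imset _ (subIr r0)); apply: eq_card => k.
apply/imsetP/idP => [[r]|]; rewrite !inE.
  by move=> /andP[rL /eqP ry] ->; rewrite subL //= mulrBl ry subrr.
move=> /andP[kL /eqP k0]; exists (k + r0); last by rewrite addrK.
by rewrite inE -{1}(opprK r0) subL ?mulrDl ?k0 ?add0r //= -sub0r subL.
Qed.

Lemma card_mulr_preim x z :
  #|[set r | r * x == z]| = if z \in lideal x then #|lann x| else 0%N.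
Proof.
case: ifP => [/lidealP[r0 ->]|xNz].
  have subT : {in [set: A] &, forall a b, a - b \in [set: A]} by move=> *; rewrite inE.
  have -> : lann x = [set k in [set: A] | k * x == 0] by apply/setP => k; rewrite !inE.
  by rewrite -(card_mulr_fiber x subT (in_setT r0)); apply: eq_card => r; rewrite !inE.
apply/eqP; rewrite cards_eq0; apply/eqP/setP => r; rewrite !inE.
by apply: contraFF xNz => /eqP <-; rewrite mem_lideal.
Qed.

Lemma card_lideal_mul_lann x : (#|lideal x| * #|lann x| = #|A|)%N.
Proof.
rewrite -[RHS]sum1_card (partition_big (fun r => r * x) (mem (lideal x))) /=; last first.
  by move=> r _; apply: mem_lideal.
rewrite -sum_nat_const; apply: eq_bigr => z zx.
have := card_mulr_preim x z; rewrite zx => <-.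
by rewrite sum1_card; apply: eq_card => r; rewrite !inE.
Qed.

Lemma card_lann_lideal x x' : lideal x = lideal x' -> #|lann x| = #|lann x'|.
Proof.
move=> xx'; apply/eqP; rewrite -(@eqn_pmul2l #|lideal x|); last first.
  by apply/card_gt0P; exists x; apply: lideal_id.
by rewrite card_lideal_mul_lann xx' card_lideal_mul_lann.
Qed.

End LeftIdeals.

Section LeftAssociates.
Variables (A : finPzRingType) (y : A).

Local Notation fiber_in L z := [set r in L | r * y == z].
Local Notation fiber_gen z L := [set r | (r * y == z) && (lideal r == L)].

Lemma card_fiber_in_lideal r0 z :
  #|fiber_in (lideal r0) z| =
  if lideal z \subset lideal (r0 * y) then #|fiber_in (lideal r0) 0| else 0%N.
Proof.
rewrite -lideal_subE; case: ifP => [/lidealP[p ->]|zNr0y].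
  rewrite mulrA card_mulr_fiber ?mem_lideal //.
  by move=> _ _ /lidealP[a ->] /lidealP[b ->]; rewrite -mulrBl mem_lideal.
apply/eqP; rewrite cards_eq0; apply/eqP/setP => r; rewrite !inE.
apply/negbTE; apply: contraFN zNr0y => /andP[/lidealP[q ->] /eqP <-].
by rewrite -mulrA mem_lideal.
Qed.

Lemma card_fiber_in_lidealE r0 z :
  #|fiber_in (lideal r0) z| =
  (\sum_(M : {set A} | M \subset lideal r0) #|fiber_gen z M|)%N.
Proof.
rewrite -sum1_card (partition_big (fun r => lideal r) (fun L => L \subset lideal r0)) /=.
  apply: eq_bigr => L sub_L; rewrite sum1_card; apply: eq_card => r.
  rewrite unfold_in /= !inE; case: (lideal r =P L) => [rL|]; rewrite ?andbF ?andbT //.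
  by rewrite lideal_subE rL sub_L.
by move=> r; rewrite inE -lideal_subE => /andP[].
Qed.

Lemma card_fiber_gen_lideal z z' L :
  lideal z = lideal z' -> #|fiber_gen z L| = #|fiber_gen z' L|.
Proof.
move=> zz'; elim: {L}#|L|.+1 {-2}L (ltnSn #|L|) => [|n IHn] L; first by rewrite ltn0.
rewrite ltnS => leLn.
have [/existsP[r0 /eqP Lr0]|Lnp] := boolP [exists r0, lideal r0 == L]; last first.
  suff fiber0 w : fiber_gen w L = set0 by rewrite !fiber0.
  apply/setP => r; rewrite !inE; case: (lideal r =P L) => [rL|]; rewrite ?andbF //.
  by case/negP: Lnp; apply/existsP; exists r; rewrite rL.
subst L; have : #|fiber_in (lideal r0) z| = #|fiber_in (lideal r0) z'|.
  by rewrite (card_fiber_in_lideal r0 z) (card_fiber_in_lideal r0 z') zz'.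
rewrite (card_fiber_in_lidealE r0 z) (card_fiber_in_lidealE r0 z').
rewrite (bigD1 (lideal r0)) // [X in _ = X -> _](bigD1 (lideal r0)) //=.
rewrite (eq_bigr (fun M => #|fiber_gen z' M|)) => [/addIn //|M sub_M].
apply: IHn; apply: leq_trans leLn.
by apply: proper_card; rewrite properEneq andbC.
Qed.

Lemma lideal_eq_unit x :
  lideal x = lideal y -> exists2 u, u \in unitsR A & x = u * y.
Proof.
move=> xy; have : (0 < #|fiber_gen y (lideal 1%R)|)%N.
  by apply/card_gt0P; exists 1; rewrite !inE mul1r !eqxx.
rewrite -(card_fiber_gen_lideal _ xy) => /card_gt0P[u].
rewrite !inE => /andP[/eqP uy /eqP u1]; exists u => //.
have /lidealP[v v1] : 1 \in lideal u by rewrite u1 lideal_id.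
by apply: (@left_inv_unitsR _ v); rewrite -v1.
Qed.

End LeftAssociates.

Section LeftIdealClasses.
Variable A : finPzRingType.
Implicit Types u x y z : A.

Lemma lideal_class y : [set x | lideal x == lideal y] = [set u * y | u in unitsR A].
Proof.
apply/setP => x; rewrite inE; apply/eqP/imsetP => [/lideal_eq_unit[u uU ->]|[u uU ->]].
  by exists u.
exact: lideal_unitl.
Qed.

Lemma lcoset_stabE y u : u \in unitsR A ->
  [set u * s | s in lstab y] = [set v in unitsR A | v * y == u * y].
Proof.
move=> uU; have /unitsRP[w [uw wu]] := uU.
have wU : w \in unitsR A by apply: (left_inv_unitsR uw).
apply/setP => v; rewrite inE; apply/imsetP/andP => [[s]|[vU /eqP vy]].
  by rewrite inE => /andP[sU /eqP sy] ->; rewrite unitsRM // -mulrA sy.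
exists (w * v); last by rewrite mulrA uw mul1r.
by rewrite inE unitsRM //= -mulrA vy mulrA wu mul1r.
Qed.

Lemma Ucard_lideal_class y : Ucard y = #|[set x | lideal x == lideal y]|.
Proof.
rewrite /Ucard; pose fiber z := [set v in unitsR A | v * y == z].
have -> : lcosets_stab y = fiber @: [set u * y | u in unitsR A].
  by rewrite -imset_comp; apply: eq_in_imset => u; apply: lcoset_stabE.
rewrite lideal_class card_in_imset // => _ z2 /imsetP[u1 u1U ->] _ fib12.
suff : u1 \in fiber z2 by rewrite inE => /andP[_ /eqP].
by rewrite -fib12 inE u1U eqxx.
Qed.

Lemma Ucard_mul_lann_le x : (Ucard x * #|lann x| <= #|A|)%N.
Proof.
rewrite -(card_lideal_mul_lann x) leq_mul2r Ucard_lideal_class; apply/orP; right.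
by apply/subset_leq_card/subsetP => y; rewrite inE => /eqP <-; apply: lideal_id.
Qed.

Variable V : nmodType.
Implicit Types F : A -> V.

Lemma sum_lideal_class F y :
  (forall x, lideal x = lideal y -> F x = F y) ->
  \sum_(x | lideal x == lideal y) F x = F y *+ Ucard y.
Proof.
move=> FyE; rewrite (eq_bigr (fun=> F y)) => [|x /eqP]; last exact: FyE.
by rewrite big_const iter_addr addr0 Ucard_lideal_class cardsE.
Qed.

Lemma sum_lideal_proper (phi : {set A}) F z :
  ideal_gen_set phi -> (forall x x', lideal x = lideal x' -> F x = F x') ->
  \sum_(x | lideal z \proper lideal x) F x =
  \sum_(y in phi | lideal z \proper lideal y) F y *+ Ucard y.
Proof.
move=> [phi_gen phi_inj] Finv.
pose rep x := odflt x [pick y in phi | lideal y == lideal x].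
have repP x : rep x \in phi /\ lideal (rep x) = lideal x.
  rewrite /rep; case: pickP => [y /andP[yphi /eqP //]|no_rep] /=.
  by have [y yphi yx] := phi_gen x; move: (no_rep y); rewrite yphi yx eqxx.
rewrite (partition_big rep (fun y => (y \in phi) && (lideal z \proper lideal y))) /=.
  apply: eq_bigr => y /andP[yphi zy]; rewrite -sum_lideal_class => [|x]; last exact: Finv.
  apply: eq_bigl => x; have [xphi rx] := repP x.
  apply/andP/eqP => [[_ /eqP <-] //|xy]; rewrite xy; split => //.
  by apply/eqP/phi_inj; rewrite // rx.
by move=> x zx; have [-> ->] := repP x.
Qed.

Lemma sum_lideal_sub (phi : {set A}) F z :
  ideal_gen_set phi -> (forall x x', lideal x = lideal x' -> F x = F x') ->
  \sum_(x | lideal z \subset lideal x) F x =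
  F z *+ Ucard z + \sum_(y in phi | lideal z \proper lideal y) F y *+ Ucard y.
Proof.
move=> phiP Finv; rewrite -sum_lideal_proper // -sum_lideal_class => [|x]; last exact: Finv.
rewrite (bigID (fun x => lideal x == lideal z)) /=; congr (_ + _); apply: eq_bigl => x.
  by case: eqP => [->|]; rewrite ?subxx ?andbF.
by rewrite properEneq andbC eq_sym.
Qed.

End LeftIdealClasses.

Section StationaryDistribution.
Variables (A : finPzRingType) (K : realFieldType) (alpha : K).

Implicit Types x z : A.

Let N : K := #|A|%:R.

Lemma natr_card_gt0 : 0 < N.
Proof. by rewrite ltr0n; apply/card_gt0P; exists 0. Qed.

Let N_neq0 : N != 0 := lt0r_neq0 natr_card_gt0.

Lemma transU_lideal x z :
  N * transU alpha x z =
  alpha + (1 - alpha) * (if lideal z \subset lideal x then #|lann x|%:R else 0).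
Proof.
have := N_neq0; rewrite /transU card_mulr_preim lideal_subE.
by move=> N_nz; case: ifP => _; field.
Qed.

Variable pi : A -> K.
Hypothesis pi_stat : stationaryU alpha pi.

Lemma stationaryU_balance z :
  N * pi z =
  alpha + (1 - alpha) * \sum_(x | lideal z \subset lideal x) #|lann x|%:R * pi x.
Proof.
have [_ [pi_sum1 ->]] := pi_stat; rewrite mulr_sumr.
under eq_bigr => x _ do rewrite mulrCA transU_lideal mulrDr.
rewrite big_split /= -mulr_suml pi_sum1 mul1r; congr (_ + _).
under eq_bigr => x _ do rewrite mulrCA.
rewrite -mulr_sumr [in RHS]big_mkcond; congr (_ * _).
by apply: eq_bigr => x _; case: ifP; rewrite ?mulr0 // mulrC.
Qed.

Lemma stationaryU_lideal x x' : lideal x = lideal x' -> pi x = pi x'.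
Proof.
by move=> xx'; apply: (mulfI N_neq0); rewrite !stationaryU_balance xx'.
Qed.

End StationaryDistribution.

Theorem corollary3p3 (A : finPzRingType) (K : realFieldType) (alpha : K)
    (phi : {set A}) (pi : A -> K) :
  0 < alpha < 1 ->
  ideal_gen_set phi ->
  stationaryU alpha pi ->
  forall x : A,
    pi x =
    (alpha + (1 - alpha) *
       \sum_(y in phi | lideal x \proper lideal y)
          (Ucard y)%:R * #|lann y|%:R * pi y)
    / (#|A|%:R - (1 - alpha) * (Ucard x)%:R * #|lann x|%:R).
Proof.
move=> /andP[alpha_gt0 alpha_lt1] phiP pi_stat x.
pose F y := #|lann y|%:R * pi y.
have Finv y y' : lideal y = lideal y' -> F y = F y'.
  by move=> yy'; rewrite /F (card_lann_lideal yy') (stationaryU_lideal pi_stat yy').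
have := stationaryU_balance pi_stat x; rewrite (sum_lideal_sub x phiP Finv) /F => balance.
under eq_bigr do rewrite -mulrA mulr_natl.
set S := \sum_(y in phi | _) _ in balance *; rewrite -[_ *+ Ucard x]mulr_natl in balance.
have N_gt0 := @natr_card_gt0 A K.
have UlN : (Ucard x)%:R * #|lann x|%:R <= #|A|%:R :> K.
  by rewrite -natrM ler_nat Ucard_mul_lann_le.
have D_gt0 : 0 < #|A|%:R - (1 - alpha) * (Ucard x)%:R * #|lann x|%:R :> K.
  by rewrite -mulrA; nra.
apply: (canRL (mulfK (lt0r_neq0 D_gt0))).
by rewrite mulrBr [pi x * _]mulrC balance; ring.
Qed.
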